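(* Let $d=1$, $S>0$, $c>0$, $\mu>0$, and consider the fields $\phi|_\pm$ and $\phi_m|_\pm$ described in the context. If for some $m\in\mathbb{N}$, some test function $f_m$ and some test function $f$ on $\mathbb{R}$ that does not vanish identically one has $\phi_m|_\pm(f_m)=\phi|_\pm(f)$, then $f$ cannot be supported in an interval of length smaller than $\frac{8}{\pi}S$.
   Context: $\mathbb{N}=\{0,1,\dots\}$. $q_0=0$; for $p\ge1$, $q_{2p}$ is the unique solution of $c^{-1}\tan(qS)=-q$ in $((p-\frac12)\frac\pi S,p\frac\pi S)$ and $q_{2p-1}$ the unique solution of $q\tan(qS)=c^{-1}$ in $((p-1)\frac\pi S,(p-\frac12)\frac\pi S)$. Let $\omega_m=\sqrt{q_m^2+\mu^2}$. Let $c_m>0$ be the normalization with $\int_{-S}^S|c_mS^{-1/2}\chi_m|^2dz+c\sum_{z=\pm S}|c_mS^{-1/2}\chi_m(z)|^2=1$, where $\chi_m=\cos(q_m z)$ ($m$ even), $\sin(q_mz)$ ($m$ odd); set $d_m=c_mS^{-1/2}\chi_m(S)$ (a non-zero real number). On the symmetric Fock space over $l^2(\mathbb{N})$ with $[a_m,a_{m'}^*]=\delta_{mm'}$, define the operator-valued distributions on $\mathbb{R}$ (time $t$) $\phi_m|_\pm(t)=(\pm)^m(2\omega_m)^{-1/2}(e^{-i\omega_mt}a_m+e^{i\omega_mt}a_m^* )$ and $\phi|_\pm(t)=\sum_m(\pm)^md_m(2\omega_m)^{-1/2}(e^{-i\omega_mt}a_m+e^{i\omega_mt}a_m^* )$;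 $\phi|_\pm$ is the restriction to the boundary component $z=\pm S$ of the quantized field of the $1+1$-dimensional strip with generalized Wentzell boundary conditions. Smearing: $\phi(f)=\int f(t)\phi(t)\,dt$. *)

From Stdlib Require Import Reals List.
From Coquelicot Require Import Coquelicot.
Open Scope R_scope.

(** Transverse spectrum: q m, m in N (characterisation by the defining
    equations on the stated intervals; the solution there is unique). *)
Definition is_q (S c : R) (q : nat -> R) : Prop :=
  q 0%nat = 0 /\
  (forall p : nat, (1 <= p)%nat ->
     (INR p - 1/2) * PI / S < q (2 * p)%nat < INR p * PI / S /\
     / c * tan (q (2 * p)%nat * S) = - q (2 * p)%nat) /\
  (forall p : nat, (1 <= p)%nat ->
     (INR p - 1) * PI / S < q (2 * p - 1)%nat < (INR p - 1/2) * PI / S /\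
     q (2 * p - 1)%nat * tan (q (2 * p - 1)%nat * S) = / c).

Definition chi (q : nat -> R) (m : nat) (z : R) : R :=
  if Nat.even m then cos (q m * z) else sin (q m * z).

Definition is_norm (S c : R) (q cm : nat -> R) : Prop :=
  forall m : nat, 0 < cm m /\
    RInt (fun z => (cm m / sqrt S * chi q m z) ^ 2) (- S) S
    + c * ((cm m / sqrt S * chi q m S) ^ 2 + (cm m / sqrt S * chi q m (- S)) ^ 2) = 1.

Definition dcoef (S : R) (q cm : nat -> R) (m : nat) : R := cm m / sqrt S * chi q m S.

Definition omega (mu : R) (q : nat -> R) (m : nat) : R := sqrt (q m ^ 2 + mu ^ 2).

Definition test_function (f : R -> C) : Prop :=
  (forall (n : nat) (x : R), ex_derive_n (fun t => Re (f t)) n x /\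
                             ex_derive_n (fun t => Im (f t)) n x) /\
  (exists A : R, forall t : R, A < Rabs t -> f t = RtoC 0).

(** hat f (w) = int_R f(t) e^{-i w t} dt  (for compactly supported f the
    integrals over [-n,n] are eventually constant). *)
Definition cexpi (x : R) : C := (cos x, sin x).
Definition fourier (f : R -> C) (w : R) : C :=
  (real (Lim_seq (fun n => RInt (fun t => Re (Cmult (f t) (cexpi (- w * t)))) (- INR n) (INR n))),
   real (Lim_seq (fun n => RInt (fun t => Im (Cmult (f t) (cexpi (- w * t)))) (- INR n) (INR n)))).

(** Symmetric Fock space over l^2(N), occupation-number representation.
    A configuration is n : nat -> nat (finitely supported); a vector is a
    coefficient function psi on configurations (psi n = <n|psi>); the finite
    particle vectors (finitely many finitely supported configurations) form
    the common dense domain of the field operators. *)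
Definition config := nat -> nat.
Definition fin_config (n : config) : Prop :=
  exists N : nat, forall k : nat, (N <= k)%nat -> n k = 0%nat.
Definition fock_vec := config -> C.
Definition finite_particle (psi : fock_vec) : Prop :=
  exists L : list config, (forall n, psi n <> RtoC 0 -> In n L) /\ List.Forall fin_config L.

Definition incr (n : config) (k : nat) : config :=
  fun j => if Nat.eqb j k then (n j + 1)%nat else n j.
Definition decr (n : config) (k : nat) : config :=
  fun j => if Nat.eqb j k then (n j - 1)%nat else n j.

(** a_k |n> = sqrt(n_k) |n - e_k>,  a_k^* |n> = sqrt(n_k + 1) |n + e_k>. *)
Definition ann (k : nat) (psi : fock_vec) : fock_vec :=
  fun n => Cmult (RtoC (sqrt (INR (n k + 1)))) (psi (incr n k)).
Definition cre (k : nat) (psi : fock_vec) : fock_vec :=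
  fun n => Cmult (RtoC (sqrt (INR (n k)))) (psi (decr n k)).

(** Complex series (on finite-particle vectors only finitely many terms are non-zero). *)
Definition csum (u : nat -> C) : C := (Series (fun k => Re (u k)), Series (fun k => Im (u k))).

Definition lin_field (alpha beta : nat -> C) (psi : fock_vec) : fock_vec :=
  fun n => csum (fun k => Cplus (Cmult (alpha k) (ann k psi n)) (Cmult (beta k) (cre k psi n))).

Definition op_eq (A B : fock_vec -> fock_vec) : Prop :=
  forall psi : fock_vec, finite_particle psi -> forall n : config, A psi n = B psi n.

Definition phi_mode_smeared (sgn mu : R) (q : nat -> R) (m : nat) (fm : R -> C)
  : fock_vec -> fock_vec :=
  lin_field
    (fun k => if Nat.eqb k m then Cmult (RtoC (sgn ^ m / sqrt (2 * omega mu q m))) (fourier fm (omega mu q m)) else RtoC 0)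
    (fun k => if Nat.eqb k m then Cmult (RtoC (sgn ^ m / sqrt (2 * omega mu q m))) (fourier fm (- omega mu q m)) else RtoC 0).

Definition phi_bdry_smeared (sgn S mu : R) (q cm : nat -> R) (f : R -> C)
  : fock_vec -> fock_vec :=
  lin_field
    (fun k => Cmult (RtoC (sgn ^ k * dcoef S q cm k / sqrt (2 * omega mu q k))) (fourier f (omega mu q k)))
    (fun k => Cmult (RtoC (sgn ^ k * dcoef S q cm k / sqrt (2 * omega mu q k))) (fourier f (- omega mu q k))).

(* If phi_m|_+-(f_m) = phi|_+-(f), comparing the coefficients of a_k and a_k^* for
   k <> m (the boundary values d_k never vanish, since q_k S lies strictly between
   consecutive multiples of pi/2) gives hat f(+-omega_k) = 0 for all k <> m, where
   (k - 1) pi/(2S) < omega_k <= k pi/(2S) + mu.  If f is supported in [a, b], then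
   for g = Re f, Im f and every phase theta the function
   F(w) = int_a^b g(t) cos(w (t - c) + theta) dt, with c = (a + b)/2, satisfies
   |F^(j)| <= A rho^j with rho = (b - a)/2, and vanishes at +-omega_k, k <> m.
   Interpolating F at the 2K nodes +-omega_(K0 + i), i < K, and applying Rolle 2K
   times bounds |F(x)| by A rho^(2K)/(2K)! prod |x^2 - omega^2|; consecutive bounds
   have ratio tending to (rho pi/(4S))^2, so F vanishes identically when
   b - a < 8S/pi.  At w = 0, choosing theta = -j pi/2, the j-th derivative is the
   j-th moment of g on [a, b]; all moments vanish, and integrating g against the
   Landau kernels (1 - ((t - t0)/D)^2)^n shows g = 0.  Hence f = 0. *)

From Stdlib Require Import Reals Lra Lia List Arith.
From Stdlib Require Import ClassicalEpsilon FunctionalExtensionality.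
From Coquelicot Require Import Coquelicot.
Open Scope R_scope.

Lemma continuous_Rplus {U : UniformSpace} (f g : U -> R) x :
  continuous f x -> continuous g x -> continuous (fun y => f y + g y) x.
Proof. exact (continuous_plus f g x). Qed.

Lemma continuous_Rminus {U : UniformSpace} (f g : U -> R) x :
  continuous f x -> continuous g x -> continuous (fun y => f y - g y) x.
Proof.
  intros Hf Hg. apply continuous_Rplus; [exact Hf|exact (continuous_opp g x Hg)].
Qed.

Lemma continuous_Rmult {U : UniformSpace} (f g : U -> R) x :
  continuous f x -> continuous g x -> continuous (fun y => f y * g y) x.
Proof. exact (continuous_mult (K := R_AbsRing) f g x). Qed.

Lemma continuous_Ropp {U : UniformSpace} (f : U -> R) x :
  continuous f x -> continuous (fun y => - f y) x.
Proof. exact (continuous_opp f x). Qed.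

Lemma continuous_pow_fun {U : UniformSpace} (f : U -> R) n x :
  continuous f x -> continuous (fun y => f y ^ n) x.
Proof.
  intros Hf. induction n as [|n IH]; simpl.
  - apply continuous_const.
  - now apply continuous_Rmult.
Qed.

Lemma continuous_cos_fun {U : UniformSpace} (f : U -> R) x :
  continuous f x -> continuous (fun y => cos (f y)) x.
Proof. intros Hf. exact (continuous_comp f cos x Hf (continuous_cos (f x))). Qed.

Lemma continuous_sin_fun {U : UniformSpace} (f : U -> R) x :
  continuous f x -> continuous (fun y => sin (f y)) x.
Proof. intros Hf. exact (continuous_comp f sin x Hf (continuous_sin (f x))). Qed.

Ltac solve_continuous :=
  repeat lazymatch goal with
  | |- continuous (fun _ => _ + _) _ => apply continuous_Rplus
  | |- continuous (fun _ => _ - _) _ => apply continuous_Rminus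
  | |- continuous (fun _ => _ * _) _ => apply continuous_Rmult
  | |- continuous (fun _ => - _) _ => apply continuous_Ropp
  | |- continuous (fun _ => _ ^ _) _ => apply continuous_pow_fun
  | |- continuous (fun _ => cos _) _ => apply continuous_cos_fun
  | |- continuous (fun _ => sin _) _ => apply continuous_sin_fun
  | |- continuous (fun y => y) _ => apply continuous_id
  | |- continuous (fun y => ?g (snd y)) _ => apply (continuous_comp snd g)
  | |- continuous snd _ => exact (continuous_snd _ _)
  | |- continuous fst _ => exact (continuous_fst _ _)
  | |- continuous (Rmult ?k) ?x => change (continuous (fun y => k * y) x)
  | |- continuous (fun _ => ?c) _ => apply continuous_const
  | |- continuous _ _ => solve [auto]
  end.

(* Equalities between integrals live in the carrier of [R_CompleteNormedModule]. *)
Ltac ring_R := lazymatch goal with |- ?x = ?y => change (@eq R x y); ring end.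

Lemma ex_RInt_continuous_R (f : R -> R) a b : (forall t, continuous f t) -> ex_RInt f a b.
Proof. intros Hf. apply (ex_RInt_continuous (V := R_CompleteNormedModule)); auto. Qed.

Lemma RInt_Rplus (f g : R -> R) a b : ex_RInt f a b -> ex_RInt g a b ->
  RInt (fun t => f t + g t) a b = RInt f a b + RInt g a b.
Proof. exact (RInt_plus f g a b). Qed.

Lemma RInt_Rminus (f g : R -> R) a b : ex_RInt f a b -> ex_RInt g a b ->
  RInt (fun t => f t - g t) a b = RInt f a b - RInt g a b.
Proof. exact (RInt_minus f g a b). Qed.

Lemma RInt_Rmult_l (k : R) (f : R -> R) a b : ex_RInt f a b ->
  RInt (fun t => k * f t) a b = k * RInt f a b.
Proof. exact (RInt_scal f a b k). Qed.

Lemma RInt_ext_R (f g : R -> R) a b : (forall t, f t = g t) -> RInt f a b = RInt g a b.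
Proof. intros H. apply RInt_ext. intros t _. apply H. Qed.

Lemma RInt_const_R (k a b : R) : RInt (fun _ => k) a b = (b - a) * k.
Proof. exact (RInt_const a b k). Qed.

Definition is_derive_chain (F : nat -> R -> R) : Prop :=
  forall (j : nat) (x : R), is_derive (F j) x (F (S j) x).

Lemma is_derive_chain_zero (F : nat -> R -> R) :
  is_derive_chain F -> (forall x, F 0%nat x = 0) -> forall j x, F j x = 0.
Proof.
  intros HF H0 j. induction j as [|j IH]; intros x; [apply H0|].
  rewrite <- (is_derive_unique _ _ _ (HF j x)).
  rewrite (functional_extensionality (F j) (fun _ => 0) IH).
  apply Derive_const.
Qed.

Lemma rolle_is_derive (f f' : R -> R) a b :
  (forall x, is_derive f x (f' x)) -> a < b -> f a = 0 -> f b = 0 ->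
  exists c, a < c < b /\ f' c = 0.
Proof.
  intros Hd Hab Ha Hb.
  assert (Hpt : forall x, derivable_pt_lim f x (f' x)) by (intros; apply is_derive_Reals, Hd).
  assert (pr : forall x, a < x < b -> derivable_pt f x) by (intros x _; exists (f' x); apply Hpt).
  destruct (Rolle f a b pr) as [c [Hc Hc0]]; [|exact Hab|congruence|].
  - intros x _. apply derivable_continuous_pt. exists (f' x). apply Hpt.
  - exists c. split; [exact Hc|]. rewrite <- Hc0. symmetry. apply derive_pt_eq_0, Hpt.
Qed.

Lemma rolle_iter N (F : nat -> R -> R) (z : nat -> R) :
  is_derive_chain F ->
  (forall i, (i < N)%nat -> z i < z (S i)) ->
  (forall i, (i <= N)%nat -> F 0%nat (z i) = 0) ->
  exists xi, F N xi = 0.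
Proof.
  revert F z. induction N as [|N IH]; intros F z HF Hz H0.
  - exists (z 0%nat). apply H0. lia.
  - assert (Hy : forall i, exists y, (i <= N)%nat -> z i < y < z (S i) /\ F 1%nat y = 0).
    { intros i. destruct (Nat.le_gt_cases i N) as [Hi|Hi]; [|exists 0; lia].
      destruct (rolle_is_derive (F 0%nat) (F 1%nat) (z i) (z (S i))) as [c Hc];
        [apply HF|apply Hz; lia|apply H0; lia|apply H0; lia|].
      now exists c. }
    destruct (choice _ Hy) as [y Hyp].
    destruct (IH (fun j => F (S j)) y (fun j => HF (S j))) as [xi Hxi].
    + intros i Hi. destruct (Hyp i) as [[A B] _]; [lia|].
      destruct (Hyp (S i)) as [[C D] _]; [lia|]. lra.
    + intros i Hi. apply Hyp. exact Hi.
    + now exists xi.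
Qed.

Fixpoint node_prod (l : list R) (w : R) : R :=
  match l with nil => 1 | z :: l' => (w - z) * node_prod l' w end.

Lemma node_prod_eq0 l w : In w l -> node_prod l w = 0.
Proof.
  induction l as [|z l IH]; simpl; [tauto|].
  intros [->|H]; [ring|rewrite IH by exact H; ring].
Qed.

Lemma node_prod_neq0 l w : ~ In w l -> node_prod l w <> 0.
Proof.
  induction l as [|z l IH]; simpl; intros Hw; [lra|].
  apply Rmult_integral_contrapositive. split.
  - intros E. apply Hw. left. lra.
  - apply IH. tauto.
Qed.

Lemma node_prod_derivatives (l : list R) : exists P : nat -> R -> R,
  (forall w, P 0%nat w = node_prod l w) /\ is_derive_chain P /\
  (forall w, P (length l) w = INR (fact (length l))) /\
  (forall j w, (length l < j)%nat -> P j w = 0).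
Proof.
  induction l as [|z l IH].
  - exists (fun j _ => match j with O => 1 | S _ => 0 end).
    split; [|split; [|split]]; try reflexivity.
    + intros [|j] x; exact (is_derive_const _ x).
    + intros [|j] w Hj; [simpl in Hj; lia|reflexivity].
  - destruct IH as [P [HP0 [HPd [HPn HPz]]]].
    (* Leibniz rule for the product [(w - z) * node_prod l w]. *)
    exists (fun j w => (w - z) * P j w + INR j * P (pred j) w).
    split; [|split; [|split]].
    + intros w. simpl. rewrite HP0. ring.
    + intros j x. auto_derive.
      * split; [eexists; apply HPd|split; [eexists; apply HPd|exact I]].
      * rewrite !(is_derive_unique _ _ _ (HPd _ x)).
        destruct j as [|j]; [simpl; ring|rewrite !S_INR; simpl; ring].
    + intros w. simpl length. rewrite (HPz (S (length l)) w) by lia.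
      simpl pred. rewrite HPn, fact_simpl, mult_INR. ring.
    + intros j w Hj. simpl in Hj. rewrite (HPz j w), (HPz (pred j) w) by lia. ring.
Qed.

Lemma interpolation_remainder_bound (F : nat -> R -> R) (A rho x : R) (l : list R) (z : nat -> R) :
  is_derive_chain F -> (forall j w, Rabs (F j w) <= A * rho ^ j) ->
  (forall i, (i < length l)%nat -> z i < z (S i)) ->
  (forall i, (i <= length l)%nat -> z i = x \/ In (z i) l) ->
  (forall y, In y l -> F 0%nat y = 0) -> ~ In x l ->
  Rabs (F 0%nat x) <= A * rho ^ length l / INR (fact (length l)) * Rabs (node_prod l x).
Proof.
  intros HF HB Hz Hzl H0 Hx.
  set (n := length l). set (p := node_prod l x).
  assert (Hp : p <> 0) by now apply node_prod_neq0.
  assert (Hfact : 0 < INR (fact n)) by apply lt_0_INR, lt_O_fact.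
  destruct (node_prod_derivatives l) as [P [HP0 [HPd [HPn _]]]].
  (* [F - c P] vanishes at the [n + 1] points [z i], so Rolle gives [F^(n) xi = c n!]. *)
  set (c := F 0%nat x / p).
  destruct (rolle_iter n (fun j w => F j w - c * P j w) z) as [xi Hxi]; [|exact Hz| |].
  - intros j w. apply (is_derive_minus (F j) (fun w => c * P j w)); [apply HF|].
    apply (is_derive_scal (P j)), HPd.
  - intros i Hi. rewrite HP0. destruct (Hzl i Hi) as [->|E].
    + unfold c, p. field. exact Hp.
    + rewrite (H0 _ E), (node_prod_eq0 _ _ E). ring.
  - simpl in Hxi. fold n in HPn. rewrite HPn in Hxi.
    assert (E : F 0%nat x = F n xi / INR (fact n) * p).
    { unfold c in Hxi. replace (F n xi) with (F 0%nat x / p * INR (fact n)) by lra.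
      field. split; [exact Hp|lra]. }
    rewrite E, Rabs_mult, Rabs_div, (Rabs_right (INR _)) by lra.
    apply Rmult_le_compat_r; [apply Rabs_pos|].
    apply Rmult_le_compat_r; [left; apply Rinv_0_lt_compat; lra|apply HB].
Qed.

Fixpoint sym_nodes (o : nat -> R) (K : nat) : list R :=
  match K with O => nil | S K => - o K :: o K :: sym_nodes o K end.

Lemma sym_nodes_length o K : length (sym_nodes o K) = (2 * K)%nat.
Proof. induction K as [|K IH]; simpl; [reflexivity|rewrite IH; lia]. Qed.

Lemma In_sym_nodes o K y :
  In y (sym_nodes o K) <-> exists i, (i < K)%nat /\ (y = - o i \/ y = o i).
Proof.
  induction K as [|K IH]; simpl.
  - split; [tauto|intros [i [Hi _]]; lia].
  - rewrite IH. split.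
    + intros [<-|[<-|[i [Hi Hy]]]]; [exists K; split; auto; lia|exists K; split; auto; lia|].
      exists i. split; [lia|exact Hy].
    + intros [i [Hi Hy]]. destruct (Nat.eq_dec i K) as [->|Hne]; [destruct Hy as [->| ->]; auto|].
      right; right. exists i. split; [lia|exact Hy].
Qed.

Definition sym_remainder (A rho x : R) (o : nat -> R) (K : nat) : R :=
  A * rho ^ (2 * K) / INR (fact (2 * K)) * Rabs (node_prod (sym_nodes o K) x).

Lemma sym_remainder_succ A rho x o K :
  sym_remainder A rho x o (S K) =
  sym_remainder A rho x o K * (rho ^ 2 * Rabs (x ^ 2 - o K ^ 2)) / ((2 * INR K + 1) * (2 * INR K + 2)).
Proof.
  unfold sym_remainder. simpl sym_nodes. cbn [node_prod].
  replace (2 * S K)%nat with (S (S (2 * K))) by lia.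
  replace (rho ^ S (S (2 * K))) with (rho ^ 2 * rho ^ (2 * K)) by (simpl; ring).
  rewrite !fact_simpl, !mult_INR, !S_INR, (mult_INR 2 K), !Rabs_mult.
  pose proof (lt_0_INR _ (lt_O_fact (2 * K))). pose proof (pos_INR K).
  replace (Rabs (x ^ 2 - o K ^ 2)) with (Rabs (x - - o K) * Rabs (x - o K))
    by (rewrite <- Rabs_mult; f_equal; ring).
  change (INR 2) with 2. field. lra.
Qed.

Lemma sym_nodes_interpolation_bound (F : nat -> R -> R) (A rho x : R) (o : nat -> R) (K : nat) :
  is_derive_chain F -> (forall j w, Rabs (F j w) <= A * rho ^ j) ->
  (forall i j, (i < j)%nat -> o i < o j) -> Rabs x < o 0%nat ->
  (forall i, (i < K)%nat -> F 0%nat (- o i) = 0 /\ F 0%nat (o i) = 0) ->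
  Rabs (F 0%nat x) <= sym_remainder A rho x o K.
Proof.
  intros HF HB Ho Hx H0.
  assert (Hbig : forall i, - o i < x < o i).
  { intros [|i]; [|specialize (Ho 0%nat (S i) ltac:(lia))];
      pose proof (Rle_abs x); pose proof (Rle_abs (- x)); rewrite Rabs_Ropp in *; lra. }
  unfold sym_remainder. rewrite <- (sym_nodes_length o K).
  (* [z] lists [-o (K-1) < ... < -o 0 < x < o 0 < ... < o (K-1)]. *)
  set (z := fun i => if (i <? K)%nat then - o (K - 1 - i)%nat
                     else if (i =? K)%nat then x else o (i - K - 1)%nat).
  apply (interpolation_remainder_bound F A rho x _ z HF HB).
  - rewrite sym_nodes_length. intros i Hi. unfold z.
    destruct (Nat.ltb_spec i K), (Nat.ltb_spec (S i) K), (Nat.eqb_spec i K), (Nat.eqb_spec (S i) K);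
      try lia.
    + apply Ropp_lt_contravar, Ho. lia.
    + apply Hbig.
    + apply Hbig.
    + apply Ho. lia.
  - rewrite sym_nodes_length. intros i Hi. unfold z.
    destruct (Nat.ltb_spec i K), (Nat.eqb_spec i K); [lia| |now left|];
      right; apply In_sym_nodes; eexists; split; [|now left| |now right]; lia.
  - intros y Hy. apply In_sym_nodes in Hy as [i [Hi [-> | ->]]]; apply H0; exact Hi.
  - intros Hin. apply In_sym_nodes in Hin as [i [_ [E|E]]]; specialize (Hbig i); lra.
Qed.

Lemma le_0_of_eventually_contracting (y s : R) (T : nat -> R) (K1 : nat) :
  0 <= s < 1 -> (forall K, (K1 <= K)%nat -> T (S K) <= s * T K) ->
  (forall K, y <= T K) -> y <= 0.
Proof.
  intros Hs Hstep Hy.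
  assert (Hgeo : forall n, T (K1 + n)%nat <= s ^ n * T K1).
  { induction n as [|n IH]; [rewrite Nat.add_0_r; simpl; lra|].
    rewrite Nat.add_succ_r. eapply Rle_trans; [apply Hstep; lia|]. simpl.
    rewrite Rmult_assoc. apply Rmult_le_compat_l; [lra|exact IH]. }
  destruct (Rle_or_lt y 0) as [H|Hpos]; [exact H|exfalso].
  set (B := Rabs (T K1) + 1).
  assert (HB : 0 < B) by (unfold B; pose proof (Rabs_pos (T K1)); lra).
  destruct (pow_lt_1_zero s ltac:(rewrite Rabs_right; lra) (y / B)) as [N HN];
    [now apply Rdiv_lt_0_compat|].
  specialize (HN N (le_n N)). rewrite Rabs_right in HN by (apply Rle_ge, pow_le; lra).
  assert (HsN : s ^ N * B < y).
  { apply (Rmult_lt_compat_r B) in HN; [|exact HB].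
    replace (y / B * B) with y in HN by (field; lra). exact HN. }
  assert (s ^ N * T K1 <= s ^ N * B).
  { apply Rmult_le_compat_l; [apply pow_le; lra|]. pose proof (Rle_abs (T K1)). unfold B. lra. }
  pose proof (Hy (K1 + N)%nat). pose proof (Hgeo N). lra.
Qed.

Lemma interpolation_ratio_eventually_lt_1 (rho delta M : R) :
  0 <= rho -> 0 < delta -> rho * delta < 2 -> 0 <= M ->
  exists s K1, 0 <= s < 1 /\ forall K, (K1 <= K)%nat ->
    (rho * ((INR K + M) * delta)) ^ 2 / ((2 * INR K + 1) * (2 * INR K + 2)) <= s.
Proof.
  intros Hrho Hdel Hrd HM. set (r := rho * delta / 2).
  assert (Hr : 0 <= r < 1) by (unfold r; split; nra).
  destruct (INR_unbounded (2 * r * M / (1 - r))) as [K1 HK1].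
  exists (((1 + r) / 2) ^ 2), (S K1). split; [split; nra|].
  intros K HK.
  assert (HK1' : INR K1 <= INR K) by (apply le_INR; lia).
  assert (HKpos : 1 <= INR K) by (apply (le_INR 1); lia).
  assert (HKM : 2 * r * M <= (1 - r) * INR K).
  { replace (2 * r * M) with (2 * r * M / (1 - r) * (1 - r)) by (field; lra). nra. }
  assert (Hnum : 0 <= rho * ((INR K + M) * delta) <= (1 + r) * INR K).
  { replace (rho * ((INR K + M) * delta)) with (2 * r * (INR K + M)) by (unfold r; field).
    split; nra. }
  apply Rle_div_l; [nra|].
  apply Rle_trans with (((1 + r) * INR K) ^ 2); [apply pow_incr; exact Hnum|].
  replace (((1 + r) / 2) ^ 2 * ((2 * INR K + 1) * (2 * INR K + 2)))
    with ((1 + r) ^ 2 * (INR K ^ 2 + 3 / 2 * INR K + 1 / 2)) by field.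
  replace (((1 + r) * INR K) ^ 2) with ((1 + r) ^ 2 * INR K ^ 2) by ring.
  apply Rmult_le_compat_l; [nra|lra].
Qed.

(* Consecutive interpolation remainders at the nodes [+-om (K0 + i)] have ratio
   tending to [(rho * delta / 2)^2 < 1]. *)
Lemma chain_zero_of_sym_zeros (F : nat -> R -> R) (A rho delta mu : R) (om : nat -> R) (m : nat) :
  is_derive_chain F -> (forall j w, Rabs (F j w) <= A * rho ^ j) ->
  0 <= rho -> 0 < delta -> rho * delta < 2 -> 0 <= mu ->
  (forall k l, (k < l)%nat -> om k < om l) ->
  (forall k, (INR k - 1) * delta < om k <= INR k * delta + mu) ->
  (forall k, k <> m -> F 0%nat (- om k) = 0 /\ F 0%nat (om k) = 0) ->
  forall x, F 0%nat x = 0.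
Proof.
  intros HF HB Hrho Hdel Hrd Hmu Hinc Hom Hzero x.
  destruct (INR_unbounded (Rabs x / delta + 1)) as [N HN].
  set (K0 := Nat.max (S m) N).
  set (o := fun i => om (K0 + i)%nat).
  set (M := INR K0 + (mu + Rabs x) / delta).
  assert (HM : 0 <= M).
  { pose proof (pos_INR K0). pose proof (Rabs_pos x).
    assert (0 <= (mu + Rabs x) / delta) by (apply Rdiv_le_0_compat; lra). unfold M. lra. }
  assert (Hxo : Rabs x < o 0%nat).
  { assert (INR N <= INR K0) by (apply le_INR; lia).
    assert (Rabs x <= (INR N - 1) * delta).
    { replace (Rabs x) with (Rabs x / delta * delta) by (field; lra). nra. }
    destruct (Hom K0) as [Hlo _]. unfold o. rewrite Nat.add_0_r. nra. }
  assert (Hoi : forall i, Rabs x + o i <= (INR i + M) * delta).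
  { intros i. destruct (Hom (K0 + i)%nat) as [_ H]. unfold o, M. rewrite plus_INR in H.
    replace ((INR i + (INR K0 + (mu + Rabs x) / delta)) * delta)
      with ((INR K0 + INR i) * delta + mu + Rabs x) by (field; lra). lra. }
  pose proof (sym_nodes_interpolation_bound F A rho x o) as Hbound.
  destruct (interpolation_ratio_eventually_lt_1 rho delta M) as [s [K1 [Hs Hratio]]]; auto.
  assert (Habs : Rabs (F 0%nat x) <= 0).
  { apply (le_0_of_eventually_contracting _ s (sym_remainder A rho x o) K1 Hs).
    - intros K HK. rewrite sym_remainder_succ.
      assert (HA : 0 <= A).
      { specialize (HB 0%nat 0). pose proof (Rabs_pos (F 0%nat 0)). simpl in HB. lra. }
      assert (HT : 0 <= sym_remainder A rho x o K).
      { unfold sym_remainder. apply Rmult_le_pos; [|apply Rabs_pos].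
        apply Rdiv_le_0_compat; [apply Rmult_le_pos; [exact HA|now apply pow_le]|].
        apply lt_0_INR, lt_O_fact. }
      assert (HoK : Rabs x < o K).
      { destruct K as [|K]; [exact Hxo|]. apply (Rlt_trans _ (o 0%nat)); [exact Hxo|apply Hinc; lia]. }
      assert (Hfac : rho ^ 2 * Rabs (x ^ 2 - o K ^ 2) <= (rho * ((INR K + M) * delta)) ^ 2).
      { pose proof (Hoi K). pose proof (Rabs_pos x).
        assert (Rabs (x ^ 2 - o K ^ 2) <= ((INR K + M) * delta) ^ 2).
        { rewrite Rabs_left; [|rewrite <- (pow2_abs x); nra]. nra. }
        rewrite Rpow_mult_distr. apply Rmult_le_compat_l; [apply pow2_ge_0|assumption]. }
      specialize (Hratio K HK).
      unfold Rdiv. rewrite Rmult_assoc, (Rmult_comm s). apply Rmult_le_compat_l; [exact HT|].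
      eapply Rle_trans; [|exact Hratio].
      apply Rmult_le_compat_r; [|exact Hfac].
      pose proof (pos_INR K). left. apply Rinv_0_lt_compat. nra.
    - intros K. apply Hbound; auto.
      + intros i j Hij. apply Hinc. lia.
      + intros i _. apply Hzero. lia. }
  pose proof (Rabs_pos (F 0%nat x)). apply Rabs_eq_0. lra.
Qed.

Lemma continuous_bounded_on (g : R -> R) a b :
  (forall t, continuous g t) -> exists M, forall t, a <= t <= b -> Rabs (g t) <= M.
Proof.
  intros Hg. destruct (Rle_or_lt a b) as [Hab|Hba]; [|exists 0; intros t Ht; lra].
  destruct (continuity_ab_maj (fun t => Rabs (g t)) a b Hab) as [t0 [Ht0 _]].
  - intros t _. apply continuity_pt_filterlim. apply (continuous_Rabs_comp g), Hg.
  - now exists (Rabs (g t0)).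
Qed.

(* [cos_transform_n g a b c theta j] is the [j]-th derivative of
   [w |-> int_a^b g t cos (w (t - c) + theta) dt]. *)
Definition cos_transform_n (g : R -> R) (a b c theta : R) (j : nat) (w : R) : R :=
  RInt (fun t => (t - c) ^ j * g t * cos (w * (t - c) + theta + INR j * (PI / 2))) a b.

Lemma is_derive_cos_transform_n (g : R -> R) a b c theta :
  (forall t, continuous g t) -> is_derive_chain (cos_transform_n g a b c theta).
Proof.
  intros Hg j w. unfold cos_transform_n.
  set (h := fun j w t => (t - c) ^ j * g t * cos (w * (t - c) + theta + INR j * (PI / 2))).
  assert (Hd : forall j w t, is_derive (fun u => h j u t) w (h (S j) w t)).
  { intros j' w' t. unfold h. auto_derive; [exact I|]. rewrite S_INR.
    replace (w' * (t - c) + theta + (INR j' + 1) * (PI / 2))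
      with (w' * (t - c) + theta + INR j' * (PI / 2) + PI / 2) by ring.
    rewrite cos_plus, cos_PI2, sin_PI2. simpl. ring. }
  change (is_derive (fun u => RInt (h j u) a b) w (RInt (h (S j) w) a b)).
  rewrite (RInt_ext (h (S j) w) (fun t => Derive (fun u => h j u t) w))
    by (intros t _; symmetry; apply is_derive_unique, Hd).
  apply (is_derive_RInt_param (fun u t => h j u t)).
  - apply filter_forall. intros u t _. eexists. apply Hd.
  - intros t _. apply continuity_2d_pt_filterlim.
    apply (continuous_ext (fun z : R * R => h (S j) (fst z) (snd z)));
      [intros z; symmetry; apply is_derive_unique, Hd|].
    unfold h. solve_continuous.
  - apply (filter_forall (F := locally w)). intros u.
    apply ex_RInt_continuous_R. intros t. unfold h. solve_continuous.
Qed.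

Lemma cos_transform_n_bound (g : R -> R) a b c theta j w Mg rho :
  a <= b -> (forall t, continuous g t) ->
  (forall t, a <= t <= b -> Rabs (t - c) <= rho /\ Rabs (g t) <= Mg) ->
  Rabs (cos_transform_n g a b c theta j w) <= (b - a) * Mg * rho ^ j.
Proof.
  intros Hab Hg Hb. unfold cos_transform_n. rewrite Rmult_assoc.
  apply abs_RInt_le_const; [exact Hab|apply ex_RInt_continuous_R; intros; solve_continuous|].
  intros t Ht. destruct (Hb t Ht) as [Hc Hgt].
  rewrite !Rabs_mult, <- RPow_abs.
  set (r := Rabs (cos (w * (t - c) + theta + INR j * (PI / 2)))).
  assert (Hr : 0 <= r <= 1).
  { split; [apply Rabs_pos|]. apply Rabs_le. apply COS_bound. }
  assert (Hp : 0 <= Rabs (t - c) ^ j <= rho ^ j).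
  { split; [apply pow_le, Rabs_pos|apply pow_incr; split; [apply Rabs_pos|exact Hc]]. }
  pose proof (Rabs_pos (g t)).
  apply Rle_trans with (Rabs (t - c) ^ j * Rabs (g t));
    [|rewrite (Rmult_comm Mg); apply Rmult_le_compat; lra].
  rewrite <- (Rmult_1_r (Rabs (t - c) ^ j * Rabs (g t))) at 2.
  apply Rmult_le_compat_l; [apply Rmult_le_pos|]; lra.
Qed.

Lemma cos_transform_n_at_0 (g : R -> R) a b c theta j : (forall t, continuous g t) ->
  cos_transform_n g a b c theta j 0 =
  cos (theta + INR j * (PI / 2)) * RInt (fun t => (t - c) ^ j * g t) a b.
Proof.
  intros Hg. unfold cos_transform_n.
  rewrite <- RInt_Rmult_l by (apply ex_RInt_continuous_R; intros; solve_continuous).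
  apply RInt_ext_R. intros t. rewrite Rmult_0_l, Rplus_0_l. ring.
Qed.

Lemma cos_transform_0_eq (g : R -> R) a b c theta w : (forall t, continuous g t) ->
  cos_transform_n g a b c theta 0 w =
  cos (theta - w * c) * RInt (fun t => g t * cos (w * t)) a b
  - sin (theta - w * c) * RInt (fun t => g t * sin (w * t)) a b.
Proof.
  intros Hg. unfold cos_transform_n.
  rewrite <- !RInt_Rmult_l, <- RInt_Rminus by (apply ex_RInt_continuous_R; intros; solve_continuous).
  apply RInt_ext_R. intros t. simpl INR.
  replace (w * (t - c) + theta + 0 * (PI / 2)) with (w * t + (theta - w * c)) by ring.
  rewrite cos_plus. ring.
Qed.

Lemma RInt_cos_opp (g : R -> R) a b w :
  RInt (fun t => g t * cos (- w * t)) a b = RInt (fun t => g t * cos (w * t)) a b.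
Proof. apply RInt_ext_R. intros t. rewrite Ropp_mult_distr_l_reverse, cos_neg. reflexivity. Qed.

Lemma RInt_sin_opp (g : R -> R) a b w : (forall t, continuous g t) ->
  RInt (fun t => g t * sin (- w * t)) a b = - RInt (fun t => g t * sin (w * t)) a b.
Proof.
  intros Hg. rewrite (RInt_ext_R _ (fun t => -1 * (g t * sin (w * t)))).
  - rewrite RInt_Rmult_l; [ring_R|]. apply ex_RInt_continuous_R. intros. solve_continuous.
  - intros t. rewrite Ropp_mult_distr_l_reverse, sin_neg. ring.
Qed.

Lemma cos_transform_0_sym_zero (g : R -> R) a b c theta om : (forall t, continuous g t) ->
  RInt (fun t => g t * cos (om * t)) a b = 0 -> RInt (fun t => g t * sin (om * t)) a b = 0 ->
  cos_transform_n g a b c theta 0 (- om) = 0 /\ cos_transform_n g a b c theta 0 om = 0.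
Proof.
  intros Hg Hc Hs.
  rewrite !cos_transform_0_eq, RInt_cos_opp, RInt_sin_opp, Hc, Hs by exact Hg. split; ring.
Qed.

Lemma moments_vanish_of_sym_zeros (g : R -> R) (a b delta mu : R) (om : nat -> R) (m : nat) :
  a <= b -> (forall t, continuous g t) -> 0 < delta -> (b - a) * delta < 4 -> 0 <= mu ->
  (forall k l, (k < l)%nat -> om k < om l) ->
  (forall k, (INR k - 1) * delta < om k <= INR k * delta + mu) ->
  (forall k, k <> m -> RInt (fun t => g t * cos (om k * t)) a b = 0 /\
                       RInt (fun t => g t * sin (om k * t)) a b = 0) ->
  forall j, RInt (fun t => (t - (a + b) / 2) ^ j * g t) a b = 0.
Proof.
  intros Hab Hg Hdel Hlen Hmu Hinc Hom Hzero j.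
  set (c := (a + b) / 2).
  set (theta := - (INR j * (PI / 2))).
  destruct (continuous_bounded_on g a b Hg) as [Mg HMg].
  assert (HF : is_derive_chain (cos_transform_n g a b c theta)) by now apply is_derive_cos_transform_n.
  assert (HF0 : forall x, cos_transform_n g a b c theta 0 x = 0).
  { apply (chain_zero_of_sym_zeros _ ((b - a) * Mg) ((b - a) / 2) delta mu om m HF); try lra; auto.
    - intros j' w. apply cos_transform_n_bound; [exact Hab|exact Hg|].
      intros t Ht. split; [apply Rabs_le; unfold c; lra|now apply HMg].
    - intros k Hk. destruct (Hzero k Hk). now apply cos_transform_0_sym_zero. }
  pose proof (is_derive_chain_zero _ HF HF0 j 0) as Hj.
  rewrite cos_transform_n_at_0 in Hj by exact Hg.
  replace (theta + INR j * (PI / 2)) with 0 in Hj by (unfold theta; ring).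
  rewrite cos_0, Rmult_1_l in Hj. exact Hj.
Qed.

Lemma moments_vanish_mul_quadratic (h : R -> R) a b c al be ga :
  (forall t, continuous h t) -> (forall j, RInt (fun t => (t - c) ^ j * h t) a b = 0) ->
  forall j, RInt (fun t => (t - c) ^ j * ((al + be * (t - c) + ga * (t - c) ^ 2) * h t)) a b = 0.
Proof.
  intros Hh Hm j.
  rewrite (RInt_ext_R _ (fun t => al * ((t - c) ^ j * h t)
             + (be * ((t - c) ^ S j * h t) + ga * ((t - c) ^ S (S j) * h t))))
    by (intros; simpl; ring).
  rewrite !RInt_Rplus, !RInt_Rmult_l, !Hm by (apply ex_RInt_continuous_R; intros; solve_continuous).
  rewrite !Rmult_0_r, !Rplus_0_r. reflexivity.
Qed.

Definition landau (t0 D : R) (n : nat) (t : R) : R := (1 - ((t - t0) / D) ^ 2) ^ n.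

Lemma continuous_landau t0 D n t : D <> 0 -> continuous (landau t0 D n) t.
Proof. intros HD. unfold landau, Rdiv. solve_continuous. Qed.

Lemma landau_moments_vanish (g : R -> R) a b c t0 D : D <> 0 -> (forall t, continuous g t) ->
  (forall j, RInt (fun t => (t - c) ^ j * g t) a b = 0) ->
  forall n j, RInt (fun t => (t - c) ^ j * (landau t0 D n t * g t)) a b = 0.
Proof.
  intros HD Hg Hm n. induction n as [|n IH]; intros j.
  - rewrite <- (Hm j). apply RInt_ext_R. intros t. unfold landau. simpl. ring.
  - set (e := c - t0).
    rewrite (RInt_ext_R _ (fun t => (t - c) ^ j * (((1 - e ^ 2 / D ^ 2) + (- 2 * e / D ^ 2) * (t - c)
               + (- 1 / D ^ 2) * (t - c) ^ 2) * (landau t0 D n t * g t))))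
      by (intros t; unfold landau, e; simpl; field; exact HD).
    apply moments_vanish_mul_quadratic; [|exact IH].
    intros t. pose proof (continuous_landau t0 D n t HD). solve_continuous.
Qed.

Lemma continuous_lower_bound_near (g : R -> R) t0 :
  continuous g t0 -> 0 < g t0 -> exists eta, 0 < eta /\ forall t, Rabs (t - t0) < eta -> g t0 / 2 < g t.
Proof.
  intros Hg Hpos.
  assert (He : 0 < g t0 / 2) by lra.
  destruct (proj1 (filterlim_locally g (g t0)) Hg (mkposreal _ He)) as [eta Heta].
  exists eta. split; [apply cond_pos|]. intros t Ht.
  specialize (Heta t Ht). change (Rabs (g t - g t0) < g t0 / 2) in Heta.
  apply Rabs_def2 in Heta. lra.
Qed.

Lemma RInt_subinterval_le (f : R -> R) a b c d :
  a <= c -> c <= d -> d <= b -> (forall t, continuous f t) ->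
  (forall t, a <= t <= b -> 0 <= f t) -> RInt f c d <= RInt f a b.
Proof.
  intros Hac Hcd Hdb Hf Hpos.
  assert (Hex : forall x y, ex_RInt f x y) by (intros; now apply ex_RInt_continuous_R).
  rewrite <- (RInt_Chasles (V := R_CompleteNormedModule) f a c b),
    <- (RInt_Chasles (V := R_CompleteNormedModule) f c d b) by apply Hex.
  assert (0 <= RInt f a c) by (apply RInt_ge_0; auto; intros; apply Hpos; lra).
  assert (0 <= RInt f d b) by (apply RInt_ge_0; auto; intros; apply Hpos; lra).
  change (RInt f c d <= RInt f a c + (RInt f c d + RInt f d b)). lra.
Qed.

Lemma le_0_of_pow_dominated (y B q1 q2 : R) :
  0 <= q2 < q1 -> (forall n, y * q1 ^ n <= B * q2 ^ n) -> y <= 0.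
Proof.
  intros Hq Hdom.
  apply (le_0_of_eventually_contracting y (q2 / q1) (fun n => B * (q2 / q1) ^ n) 0).
  - split; [apply Rdiv_le_0_compat; lra|]. apply (Rmult_lt_reg_r q1); [lra|].
    unfold Rdiv. rewrite Rmult_assoc, Rinv_l, Rmult_1_r, Rmult_1_l by lra. lra.
  - intros K _. simpl. apply Req_le. ring.
  - intros n. specialize (Hdom n). assert (0 < q1 ^ n) by (apply pow_lt; lra).
    unfold Rdiv. rewrite Rpow_mult_distr, pow_inv.
    apply (Rmult_le_reg_r (q1 ^ n)); [assumption|].
    replace (B * (q2 ^ n * / q1 ^ n) * q1 ^ n) with (B * q2 ^ n) by (field; lra). exact Hdom.
Qed.

Lemma landau_base_abs t0 D t : 1 - ((t - t0) / D) ^ 2 = 1 - (Rabs (t - t0) / D) ^ 2.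
Proof. unfold Rdiv. rewrite !Rpow_mult_distr, pow2_abs. reflexivity. Qed.

Lemma landau_base_antitone (D u v : R) : 0 < D -> 0 <= u <= v -> v <= D ->
  0 <= 1 - (v / D) ^ 2 <= 1 - (u / D) ^ 2.
Proof.
  intros HD Huv HvD.
  assert (0 <= u / D <= v / D).
  { split; [apply Rdiv_le_0_compat; lra|].
    apply Rmult_le_compat_r; [apply Rlt_le, Rinv_0_lt_compat|]; lra. }
  assert (v / D <= 1) by (apply (Rdiv_le_1 _ _ HD); lra).
  split; nra.
Qed.

Lemma landau_nonneg t0 D n t : 0 < D -> Rabs (t - t0) <= D -> 0 <= landau t0 D n t.
Proof.
  intros HD Ht. unfold landau. apply pow_le. rewrite landau_base_abs.
  apply (landau_base_antitone D 0); [exact HD|split; [lra|apply Rabs_pos]|exact Ht].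
Qed.

Lemma landau_le t0 D r n t : 0 < D -> 0 <= r <= Rabs (t - t0) -> Rabs (t - t0) <= D ->
  landau t0 D n t <= (1 - (r / D) ^ 2) ^ n.
Proof.
  intros HD Hr Ht. unfold landau. apply pow_incr. rewrite landau_base_abs.
  now apply landau_base_antitone.
Qed.

Lemma landau_ge t0 D r n t : 0 < D -> Rabs (t - t0) <= r <= D ->
  (1 - (r / D) ^ 2) ^ n <= landau t0 D n t.
Proof.
  intros HD Hr. unfold landau. apply pow_incr. rewrite landau_base_abs.
  pose proof (Rabs_pos (t - t0)). now apply landau_base_antitone.
Qed.

Lemma window_around (a b t0 r : R) : a <= t0 <= b -> 0 <= r -> 2 * r <= b - a ->
  exists al, a <= al /\ al + r <= b /\ forall t, al <= t <= al + r -> Rabs (t - t0) <= r.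
Proof.
  intros Ht0 Hr Hrb. destruct (Rle_or_lt (t0 + r) b); [exists t0|exists (t0 - r)];
    (repeat split; [lra|lra|intros t Ht; apply Rabs_le; lra]).
Qed.

Lemma RInt_ge_on_window (h : R -> R) a b al r L :
  (forall t, continuous h t) -> a <= al -> 0 <= r -> al + r <= b ->
  (forall t, a <= t <= b -> 0 <= h t) -> (forall t, al <= t <= al + r -> L <= h t) ->
  r * L <= RInt h a b.
Proof.
  intros Hh Hal Hr Hb Hpos Hwin.
  replace (r * L) with (RInt (fun _ => L) al (al + r)) by (rewrite RInt_const_R; ring_R).
  eapply Rle_trans; [|apply (RInt_subinterval_le h a b al (al + r)); auto; lra].
  apply RInt_le; [lra| |now apply ex_RInt_continuous_R|].
  - apply ex_RInt_continuous_R. intros. solve_continuous.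
  - intros t Ht. apply Hwin. lra.
Qed.

(* If [g t0 > 0], the Landau kernels concentrate at [t0], so that eventually
   [int_a^b landau n * g > 0]. *)
Lemma landau_orthogonal_nonpos (g : R -> R) a b t0 :
  a < b -> (forall t, continuous g t) -> a <= t0 <= b ->
  (forall n, RInt (fun t => landau t0 (2 * (b - a)) n t * g t) a b = 0) -> g t0 <= 0.
Proof.
  intros Hab Hg Ht0 Hm.
  destruct (Rle_or_lt (g t0) 0) as [H|Hpos]; [exact H|exfalso].
  set (D := 2 * (b - a)). assert (HD : 0 < D) by (unfold D; lra). fold D in Hm.
  destruct (continuous_lower_bound_near g t0 (Hg t0) Hpos) as [eta0 [Heta0 Hnear]].
  set (eta := Rmin eta0 (b - a)).
  assert (Heta : 0 < eta <= b - a /\ eta <= eta0)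
    by (unfold eta; repeat split; [apply Rmin_pos|apply Rmin_r|apply Rmin_l]; lra).
  destruct (continuous_bounded_on g a b Hg) as [Mg HMg].
  assert (HMg0 : 0 < Mg) by (specialize (HMg t0 Ht0); rewrite Rabs_right in HMg; lra).
  set (q1 := 1 - (eta / 2 / D) ^ 2). set (q2 := 1 - (eta / D) ^ 2).
  assert (Hq : 0 <= q2 < q1).
  { assert (0 < eta / 2 / D) by (apply Rdiv_lt_0_compat; lra).
    assert (eta / D <= 1 / 2) by (apply Rle_div_l; unfold D; lra).
    replace (eta / D) with (2 * (eta / 2 / D)) in * by (field; lra).
    unfold q1, q2. split; nra. }
  destruct (window_around a b t0 (eta / 2) Ht0 ltac:(lra) ltac:(lra)) as [al [Hal [Hbe Hwin]]].
  assert (Hy : g t0 / 2 * (eta / 2) <= 0); [|nra].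
  apply (le_0_of_pow_dominated _ (Mg * (b - a)) q1 q2 Hq). intros n.
  set (h := fun t => landau t0 D n t * g t + Mg * q2 ^ n).
  assert (Hq2n : 0 <= q2 ^ n) by (apply pow_le; lra).
  assert (Hcont : forall t, continuous h t).
  { intros t. pose proof (continuous_landau t0 D n t ltac:(lra)). unfold h. solve_continuous. }
  assert (Hh : forall t, a <= t <= b -> 0 <= h t).
  { intros t Ht. assert (Htd : Rabs (t - t0) <= D) by (apply Rabs_le; unfold D; lra).
    pose proof (landau_nonneg t0 D n t HD Htd). unfold h.
    destruct (Rlt_or_le (Rabs (t - t0)) eta0) as [Hc|Hc].
    - specialize (Hnear t Hc). nra.
    - pose proof (landau_le t0 D eta n t HD ltac:(lra) Htd) as Hle. fold q2 in Hle.
      specialize (HMg t Ht). apply Rabs_le_between in HMg.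
      assert (0 <= landau t0 D n t * (g t + Mg)) by (apply Rmult_le_pos; lra).
      assert (0 <= Mg * (q2 ^ n - landau t0 D n t)) by (apply Rmult_le_pos; lra).
      lra. }
  assert (Hwin_h : forall t, al <= t <= al + eta / 2 -> g t0 / 2 * q1 ^ n <= h t).
  { intros t Ht. specialize (Hwin t Ht).
    assert (g t0 / 2 < g t) by (apply Hnear; lra).
    pose proof (landau_ge t0 D (eta / 2) n t HD ltac:(unfold D; lra)) as Hge. fold q1 in Hge.
    assert (0 <= q1 ^ n) by (apply pow_le; lra).
    unfold h. nra. }
  assert (Hint : RInt h a b = (b - a) * (Mg * q2 ^ n)).
  { unfold h. rewrite RInt_Rplus, Hm, RInt_const_R; [apply Rplus_0_l| |];
      apply ex_RInt_continuous_R; intros t; [|solve_continuous].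
    pose proof (continuous_landau t0 D n t ltac:(lra)). solve_continuous. }
  pose proof (RInt_ge_on_window h a b al (eta / 2) _ Hcont Hal ltac:(lra) Hbe Hh Hwin_h). lra.
Qed.

Lemma zero_of_moments_vanish (g : R -> R) a b c :
  a < b -> (forall t, continuous g t) -> (forall j, RInt (fun t => (t - c) ^ j * g t) a b = 0) ->
  forall t, a <= t <= b -> g t = 0.
Proof.
  intros Hab Hg Hm.
  assert (Hnonpos : forall h : R -> R, (forall t, continuous h t) ->
            (forall j, RInt (fun t => (t - c) ^ j * h t) a b = 0) ->
            forall t, a <= t <= b -> h t <= 0).
  { intros h Hh Hmh t Ht. apply (landau_orthogonal_nonpos h a b t Hab Hh Ht).
    intros n. rewrite <- (landau_moments_vanish h a b c t (2 * (b - a)) ltac:(lra) Hh Hmh n 0).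
    apply RInt_ext_R. intros s. simpl. ring. }
  intros t Ht. apply Rle_antisym; [now apply Hnonpos|].
  assert (- g t <= 0); [|lra].
  apply (Hnonpos (fun s => - g s)); [intros; solve_continuous| |exact Ht].
  intros j. rewrite (RInt_ext_R _ (fun s => -1 * ((s - c) ^ j * g s))) by (intros; ring).
  rewrite RInt_Rmult_l, Hm; [apply Rmult_0_r|apply ex_RInt_continuous_R; intros; solve_continuous].
Qed.

Lemma Lim_seq_RInt_window (h : R -> R) a b : a <= b -> (forall t, continuous h t) ->
  (forall t, t < a \/ b < t -> h t = 0) ->
  real (Lim_seq (fun n => RInt h (- INR n) (INR n))) = RInt h a b.
Proof.
  intros Hab Hh Hz.
  assert (Hex : forall x y, ex_RInt h x y) by (intros; now apply ex_RInt_continuous_R).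
  assert (Hl : forall x, x <= a -> RInt h x a = 0).
  { intros x Hx. rewrite (RInt_ext h (fun _ => 0)), RInt_const_R; [ring_R|].
    intros t Ht. rewrite Rmin_left, Rmax_right in Ht by lra. apply Hz. lra. }
  assert (Hr : forall y, b <= y -> RInt h b y = 0).
  { intros y Hy. rewrite (RInt_ext h (fun _ => 0)), RInt_const_R; [ring_R|].
    intros t Ht. rewrite Rmin_left, Rmax_right in Ht by lra. apply Hz. lra. }
  destruct (INR_unbounded (Rmax (Rabs a) (Rabs b))) as [N HN].
  rewrite (is_lim_seq_unique _ (RInt h a b)); [reflexivity|].
  apply (is_lim_seq_ext_loc (fun _ => RInt h a b)); [|apply is_lim_seq_const].
  exists N. intros n Hn.
  assert (INR N <= INR n) by (apply le_INR; exact Hn).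
  pose proof (Rmax_l (Rabs a) (Rabs b)). pose proof (Rmax_r (Rabs a) (Rabs b)).
  pose proof (Rle_abs b). pose proof (Rle_abs (- a)). rewrite Rabs_Ropp in *.
  rewrite <- (RInt_Chasles (V := R_CompleteNormedModule) h (- INR n) b (INR n)),
    <- (RInt_Chasles (V := R_CompleteNormedModule) h (- INR n) a b) by apply Hex.
  change (RInt h a b = RInt h (- INR n) a + RInt h a b + RInt h b (INR n)).
  rewrite Hl, Hr by lra. lra.
Qed.

Lemma fourier_of_compact_support (f : R -> C) a b w : a <= b ->
  (forall t, continuous (fun s => Re (f s)) t) -> (forall t, continuous (fun s => Im (f s)) t) ->
  (forall t, f t <> RtoC 0 -> a <= t <= b) ->
  fourier f w =
  (RInt (fun t => Re (f t) * cos (w * t)) a b + RInt (fun t => Im (f t) * sin (w * t)) a b,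
   RInt (fun t => Im (f t) * cos (w * t)) a b - RInt (fun t => Re (f t) * sin (w * t)) a b).
Proof.
  intros Hab Hu Hv Hs.
  assert (Hz : forall t, t < a \/ b < t -> f t = RtoC 0).
  { intros t Ht. destruct (excluded_middle_informative (f t = RtoC 0)) as [E|E]; [exact E|].
    apply Hs in E. lra. }
  assert (Hex : forall g : R -> R, (forall t, continuous g t) -> ex_RInt g a b)
    by (intros; now apply ex_RInt_continuous_R).
  unfold fourier, cexpi. f_equal.
  - rewrite <- RInt_Rplus by (apply Hex; intros; solve_continuous).
    rewrite <- (Lim_seq_RInt_window _ a b Hab); [| intros; solve_continuous |].
    + f_equal. apply Lim_seq_ext. intros n. apply RInt_ext_R. intros t.
      rewrite Ropp_mult_distr_l_reverse, cos_neg, sin_neg. unfold Re, Im. simpl. ring.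
    + intros t Ht. rewrite (Hz t Ht). simpl. ring.
  - rewrite <- RInt_Rminus by (apply Hex; intros; solve_continuous).
    rewrite <- (Lim_seq_RInt_window _ a b Hab); [| intros; solve_continuous |].
    + f_equal. apply Lim_seq_ext. intros n. apply RInt_ext_R. intros t.
      rewrite Ropp_mult_distr_l_reverse, cos_neg, sin_neg. unfold Re, Im. simpl. ring.
    + intros t Ht. rewrite (Hz t Ht). simpl. ring.
Qed.

Lemma trig_integrals_vanish_of_fourier_zero (f : R -> C) a b om : a <= b ->
  (forall t, continuous (fun s => Re (f s)) t) -> (forall t, continuous (fun s => Im (f s)) t) ->
  (forall t, f t <> RtoC 0 -> a <= t <= b) ->
  fourier f (- om) = RtoC 0 -> fourier f om = RtoC 0 ->
  (RInt (fun t => Re (f t) * cos (om * t)) a b = 0 /\ RInt (fun t => Re (f t) * sin (om * t)) a b = 0) /\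
  (RInt (fun t => Im (f t) * cos (om * t)) a b = 0 /\ RInt (fun t => Im (f t) * sin (om * t)) a b = 0).
Proof.
  intros Hab Hu Hv Hs Hneg Hpos.
  rewrite (fourier_of_compact_support f a b _ Hab Hu Hv Hs), RInt_cos_opp, RInt_cos_opp,
    RInt_sin_opp, RInt_sin_opp in Hneg by assumption.
  rewrite (fourier_of_compact_support f a b _ Hab Hu Hv Hs) in Hpos.
  injection Hneg as Hn1 Hn2. injection Hpos as Hp1 Hp2.
  repeat split; lra.
Qed.

Lemma compact_zero_of_fourier_sym_zeros (f : R -> C) (a b delta mu : R) (om : nat -> R) (m : nat) :
  a < b -> (forall t, continuous (fun s => Re (f s)) t) -> (forall t, continuous (fun s => Im (f s)) t) ->
  (forall t, f t <> RtoC 0 -> a <= t <= b) ->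
  0 < delta -> (b - a) * delta < 4 -> 0 <= mu ->
  (forall k l, (k < l)%nat -> om k < om l) ->
  (forall k, (INR k - 1) * delta < om k <= INR k * delta + mu) ->
  (forall k, k <> m -> fourier f (- om k) = RtoC 0 /\ fourier f (om k) = RtoC 0) ->
  forall t, f t = RtoC 0.
Proof.
  intros Hab Hu Hv Hs Hdel Hlen Hmu Hinc Hom Hzero t.
  destruct (excluded_middle_informative (f t = RtoC 0)) as [E|E]; [exact E|].
  pose proof (Hs t E) as Ht.
  assert (Hint := fun k Hk => let (Hn, Hp) := Hzero k Hk in
                   trig_integrals_vanish_of_fourier_zero f a b (om k) ltac:(lra) Hu Hv Hs Hn Hp).
  assert (Hre : Re (f t) = 0).
  { apply (zero_of_moments_vanish (fun s => Re (f s)) a b ((a + b) / 2)); auto.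
    apply (moments_vanish_of_sym_zeros _ a b delta mu om m); auto; try lra.
    intros k Hk. exact (proj1 (Hint k Hk)). }
  assert (Him : Im (f t) = 0).
  { apply (zero_of_moments_vanish (fun s => Im (f s)) a b ((a + b) / 2)); auto.
    apply (moments_vanish_of_sym_zeros _ a b delta mu om m); auto; try lra.
    intros k Hk. exact (proj2 (Hint k Hk)). }
  destruct (f t) as [x y]. simpl in Hre, Him. now rewrite Hre, Him.
Qed.

Lemma is_q_bounds S c q : 0 < S -> is_q S c q -> forall k, (1 <= k)%nat ->
  (INR k - 1) * (PI / 2) < q k * S < INR k * (PI / 2).
Proof.
  intros HS [_ [Hev Hod]] k Hk.
  destruct (Nat.Even_or_Odd k) as [[p ->]|[p ->]].
  - destruct (Hev p ltac:(lia)) as [[A B] _].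
    apply (Rlt_div_l _ _ _ HS) in A. apply (Rlt_div_r _ _ _ HS) in B.
    rewrite mult_INR. change (INR 2) with 2. split; nra.
  - destruct (Hod (Datatypes.S p) ltac:(lia)) as [[A B] _].
    replace (2 * Datatypes.S p - 1)%nat with (2 * p + 1)%nat in * by lia.
    apply (Rlt_div_l _ _ _ HS) in A. apply (Rlt_div_r _ _ _ HS) in B.
    rewrite S_INR in A, B. rewrite plus_INR, mult_INR. change (INR 2) with 2. change (INR 1) with 1.
    split; nra.
Qed.

Lemma omega_bounds S c mu q : 0 < S -> 0 <= mu -> is_q S c q ->
  (forall k l, (k < l)%nat -> omega mu q k < omega mu q l) /\
  (forall k, (INR k - 1) * (PI / (2 * S)) < omega mu q k <= INR k * (PI / (2 * S)) + mu).
Proof.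
  intros HS Hmu Hq. set (delta := PI / (2 * S)).
  assert (Hdel : 0 < delta) by (unfold delta; apply Rdiv_lt_0_compat; [apply PI_RGT_0|lra]).
  assert (Hqb : forall k, (INR k - 1) * delta < q k <= INR k * delta /\ 0 <= q k).
  { intros [|k].
    - destruct Hq as [Hq0 _]. rewrite Hq0. simpl. lra.
    - destruct (is_q_bounds S c q HS Hq (Datatypes.S k) ltac:(lia)) as [A B].
      replace ((INR (Datatypes.S k) - 1) * (PI / 2)) with ((INR (Datatypes.S k) - 1) * delta * S) in A
        by (unfold delta; field; lra).
      replace (INR (Datatypes.S k) * (PI / 2)) with (INR (Datatypes.S k) * delta * S) in B
        by (unfold delta; field; lra).
      apply Rmult_lt_reg_r in A; [|exact HS]. apply Rmult_lt_reg_r in B; [|exact HS].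
      rewrite S_INR in *. pose proof (pos_INR k). split; [split|]; nra. }
  assert (Hsq : forall x, 0 <= x -> x <= sqrt (x ^ 2 + mu ^ 2) <= x + mu).
  { intros x Hx. split.
    - rewrite <- (sqrt_pow2 x Hx) at 1. apply sqrt_le_1_alt. nra.
    - rewrite <- (sqrt_pow2 (x + mu)) by lra. apply sqrt_le_1_alt. nra. }
  split.
  - intros k l Hkl. unfold omega. apply sqrt_lt_1_alt.
    destruct (Hqb k) as [[_ Hk] Hk0]. destruct (Hqb l) as [[Hl _] _].
    assert (INR k + 1 <= INR l) by (rewrite <- S_INR; apply le_INR; lia).
    split; [nra|]. assert (q k < q l) by nra. nra.
  - intros k. destruct (Hqb k) as [[Hlo Hhi] Hk0]. destruct (Hsq (q k) Hk0). unfold omega. lra.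
Qed.

Lemma sin_cos_neq0_between (x : R) (n : nat) :
  (INR n - 1) * (PI / 2) < x < INR n * (PI / 2) -> sin x <> 0 /\ cos x <> 0.
Proof.
  intros Hx. pose proof PI_RGT_0 as HPI.
  assert (H2 : sin (2 * x) <> 0).
  { intros H. apply sin_eq_0_0 in H as [z Hz].
    assert (Hz1 : IZR z < INR n) by (apply (Rmult_lt_reg_r PI); nra).
    assert (Hz2 : INR n - 1 < IZR z) by (apply (Rmult_lt_reg_r PI); nra).
    rewrite INR_IZR_INZ in Hz1, Hz2. apply lt_IZR in Hz1.
    rewrite <- minus_IZR in Hz2. apply lt_IZR in Hz2. lia. }
  rewrite sin_2a in H2. split; intros E; apply H2; rewrite E; ring.
Qed.

Lemma chi_S_neq0 S c q k : 0 < S -> is_q S c q -> chi q k S <> 0.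
Proof.
  intros HS Hq. unfold chi. destruct k as [|k].
  - destruct Hq as [Hq0 _]. simpl. rewrite Hq0, Rmult_0_l, cos_0. lra.
  - destruct (is_q_bounds S c q HS Hq (Datatypes.S k) ltac:(lia)) as [A B].
    destruct (sin_cos_neq0_between (q (Datatypes.S k) * S) (Datatypes.S k)) as [Hs Hc]; [lra|].
    now destruct (Nat.even (Datatypes.S k)).
Qed.

Lemma bdry_coef_neq0 S c mu q cm sgn k :
  0 < S -> 0 < mu -> is_q S c q -> is_norm S c q cm -> (sgn = 1 \/ sgn = -1) ->
  sgn ^ k * dcoef S q cm k / sqrt (2 * omega mu q k) <> 0.
Proof.
  intros HS Hmu Hq Hn Hsgn.
  assert (Hom : 0 < omega mu q k) by (unfold omega; apply sqrt_lt_R0; pose proof (pow2_ge_0 (q k)); nra).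
  assert (Hsq : 0 < sqrt (2 * omega mu q k)) by (apply sqrt_lt_R0; lra).
  assert (HsS : 0 < sqrt S) by (apply sqrt_lt_R0; exact HS).
  assert (Hd : dcoef S q cm k <> 0).
  { unfold dcoef. destruct (Hn k) as [Hcm _].
    apply Rmult_integral_contrapositive. split; [|now apply (chi_S_neq0 S c)].
    apply Rgt_not_eq, Rdiv_lt_0_compat; lra. }
  apply Rmult_integral_contrapositive. split; [|apply Rinv_neq_0_compat; lra].
  apply Rmult_integral_contrapositive. split; [apply pow_nonzero; lra|exact Hd].
Qed.

Lemma sum_n_kronecker (j : nat) (x : R) n :
  sum_n (fun k => if Nat.eqb k j then x else 0) n = if Nat.leb j n then x else 0.
Proof.
  induction n as [|n IH].
  - rewrite sum_O. now destruct j.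
  - rewrite sum_Sn, IH.
    destruct (Nat.eqb_spec (S n) j), (Nat.leb_spec j n), (Nat.leb_spec j (S n)); try lia;
      unfold plus; simpl; lra.
Qed.

Lemma Series_kronecker (j : nat) (x : R) : Series (fun k => if Nat.eqb k j then x else 0) = x.
Proof.
  apply is_series_unique. apply (filterlim_ext_loc (fun _ => x)); [|apply filterlim_const].
  exists j. intros n Hn. rewrite sum_n_kronecker. destruct (Nat.leb_spec j n); [reflexivity|lia].
Qed.

Lemma csum_kronecker (j : nat) (z : C) : csum (fun k => if Nat.eqb k j then z else RtoC 0) = z.
Proof.
  destruct z as [x y]. unfold csum. f_equal.
  - etransitivity; [|apply (Series_kronecker j x)].
    apply Series_ext. intros k. now destruct (Nat.eqb k j).
  - etransitivity; [|apply (Series_kronecker j y)].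
    apply Series_ext. intros k. now destruct (Nat.eqb k j).
Qed.

Definition vacuum : config := fun _ => 0%nat.
Definition one_particle (j : nat) : config := fun i => if Nat.eqb i j then 1%nat else 0%nat.
Definition basis_vec (n0 : config) : fock_vec :=
  fun n => if excluded_middle_informative (n = n0) then RtoC 1 else RtoC 0.

Lemma finite_particle_basis_vec n0 : fin_config n0 -> finite_particle (basis_vec n0).
Proof.
  intros H. exists (n0 :: nil). split; [|now repeat constructor].
  intros n Hn. unfold basis_vec in Hn.
  destruct (excluded_middle_informative (n = n0)) as [->|]; [now left|contradiction].
Qed.

Lemma fin_config_vacuum : fin_config vacuum.
Proof. now exists 0%nat. Qed.

Lemma fin_config_one_particle j : fin_config (one_particle j).
Proof.
  exists (S j). intros k Hk. unfold one_particle. destruct (Nat.eqb_spec k j); [lia|reflexivity].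
Qed.

Lemma lin_field_vacuum al be j : lin_field al be (basis_vec vacuum) (one_particle j) = be j.
Proof.
  unfold lin_field. rewrite <- (csum_kronecker j (be j)). f_equal.
  apply functional_extensionality. intros k.
  assert (Hann : ann k (basis_vec vacuum) (one_particle j) = RtoC 0).
  { unfold ann, basis_vec.
    destruct (excluded_middle_informative (incr (one_particle j) k = vacuum)) as [E|E].
    - exfalso. apply (f_equal (fun n => n k)) in E. unfold incr, vacuum in E.
      rewrite Nat.eqb_refl in E. lia.
    - apply Cmult_0_r. }
  rewrite Hann, Cmult_0_r, Cplus_0_l.
  unfold cre, basis_vec. destruct (Nat.eqb_spec k j) as [->|Hne].
  - destruct (excluded_middle_informative (decr (one_particle j) j = vacuum)) as [E|E].
    + unfold one_particle at 1. rewrite Nat.eqb_refl. simpl INR. rewrite sqrt_1, !Cmult_1_r. reflexivity.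
    + exfalso. apply E. apply functional_extensionality. intros i. unfold decr, one_particle, vacuum.
      now destruct (Nat.eqb_spec i j).
  - unfold one_particle at 1. destruct (Nat.eqb_spec k j); [contradiction|].
    simpl INR. rewrite sqrt_0, Cmult_0_l, Cmult_0_r. reflexivity.
Qed.

Lemma lin_field_one_particle al be j : lin_field al be (basis_vec (one_particle j)) vacuum = al j.
Proof.
  unfold lin_field. rewrite <- (csum_kronecker j (al j)). f_equal.
  apply functional_extensionality. intros k.
  assert (Hcre : cre k (basis_vec (one_particle j)) vacuum = RtoC 0).
  { unfold cre, vacuum. simpl INR. rewrite sqrt_0. apply Cmult_0_l. }
  rewrite Hcre, Cmult_0_r, Cplus_0_r.
  unfold ann, basis_vec. unfold vacuum at 1. simpl INR. rewrite sqrt_1, Cmult_1_l.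
  destruct (excluded_middle_informative (incr vacuum k = one_particle j)) as [E|E].
  - assert (k = j).
    { apply (f_equal (fun n => n j)) in E. unfold incr, one_particle, vacuum in E.
      rewrite Nat.eqb_refl in E. destruct (Nat.eqb_spec j k); [lia|discriminate]. }
    subst k. rewrite Nat.eqb_refl, Cmult_1_r. reflexivity.
  - destruct (Nat.eqb_spec k j) as [->|]; [|apply Cmult_0_r].
    exfalso. apply E. apply functional_extensionality. intros i. unfold incr, one_particle, vacuum.
    now destruct (Nat.eqb_spec i j).
Qed.

Lemma op_eq_lin_field_coef al1 be1 al2 be2 :
  op_eq (lin_field al1 be1) (lin_field al2 be2) -> forall j, al1 j = al2 j /\ be1 j = be2 j.
Proof.
  intros H j. split.
  - rewrite <- (lin_field_one_particle al1 be1 j), <- (lin_field_one_particle al2 be2 j).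
    apply H, finite_particle_basis_vec, fin_config_one_particle.
  - rewrite <- (lin_field_vacuum al1 be1 j), <- (lin_field_vacuum al2 be2 j).
    apply H, finite_particle_basis_vec, fin_config_vacuum.
Qed.

Lemma RtoC_mult_eq0 (r : R) (z : C) : r <> 0 -> RtoC 0 = Cmult (RtoC r) z -> z = RtoC 0.
Proof.
  intros Hr H. destruct z as [x y]. unfold Cmult, RtoC in H. simpl in H. injection H as H1 H2.
  unfold RtoC. f_equal; apply (Rmult_eq_reg_l r); lra.
Qed.

Lemma fourier_zeros_of_op_eq S c mu q cm sgn m fm f :
  0 < S -> 0 < mu -> is_q S c q -> is_norm S c q cm -> (sgn = 1 \/ sgn = -1) ->
  op_eq (phi_mode_smeared sgn mu q m fm) (phi_bdry_smeared sgn S mu q cm f) ->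
  forall k, k <> m -> fourier f (- omega mu q k) = RtoC 0 /\ fourier f (omega mu q k) = RtoC 0.
Proof.
  intros HS Hmu Hq Hn Hsgn Hop k Hk.
  destruct (op_eq_lin_field_coef _ _ _ _ Hop k) as [Hal Hbe].
  rewrite (proj2 (Nat.eqb_neq k m) Hk) in Hal, Hbe.
  pose proof (bdry_coef_neq0 S c mu q cm sgn k HS Hmu Hq Hn Hsgn) as Hr.
  split; eapply RtoC_mult_eq0; eassumption.
Qed.

Lemma test_function_continuous (f : R -> C) : test_function f ->
  (forall t, continuous (fun s => Re (f s)) t) /\ (forall t, continuous (fun s => Im (f s)) t).
Proof.
  intros [Hd _]. split; intros t; destruct (Hd 1%nat t) as [H1 H2];
    now apply (ex_derive_continuous (K := R_AbsRing) (V := R_NormedModule)).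
Qed.

Theorem proposition8 (S c mu : R) (q cm : nat -> R) (sgn : R) (m : nat) (fm f : R -> C) :
  0 < S -> 0 < c -> 0 < mu ->
  is_q S c q -> is_norm S c q cm ->
  (sgn = 1 \/ sgn = -1) ->
  test_function fm -> test_function f ->
  (exists t : R, f t <> RtoC 0) ->
  op_eq (phi_mode_smeared sgn mu q m fm) (phi_bdry_smeared sgn S mu q cm f) ->
  ~ (exists a b : R, b - a < 8 / PI * S /\ (forall t : R, f t <> RtoC 0 -> a <= t <= b)).
Proof.
  intros HS Hc Hmu Hq Hn Hsgn _ Hf [t0 Ht0] Hop [a [b [Hlen Hsupp]]].
  pose proof PI_RGT_0 as HPI.
  assert (Hab : a <= b) by (pose proof (Hsupp t0 Ht0); lra).
  set (b' := (a + b + 8 / PI * S) / 2).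
  assert (Hb' : b <= b' /\ a < b' /\ (b' - a) * (PI / (2 * S)) < 4).
  { assert (0 < 8 / PI * S) by (apply Rmult_lt_0_compat; [apply Rdiv_lt_0_compat|]; lra).
    unfold b'. repeat split; try lra.
    replace 4 with (8 / PI * S * (PI / (2 * S))) by (field; lra).
    apply Rmult_lt_compat_r; [apply Rdiv_lt_0_compat|]; lra. }
  destruct (test_function_continuous f Hf) as [Hu Hv].
  destruct (omega_bounds S c mu q HS ltac:(lra) Hq) as [Hinc Hom].
  apply Ht0, (compact_zero_of_fourier_sym_zeros f a b' (PI / (2 * S)) mu (omega mu q) m); try lra; auto.
  - intros t Ht. pose proof (Hsupp t Ht). lra.
  - apply Rdiv_lt_0_compat; lra.
  - exact (fourier_zeros_of_op_eq S c mu q cm sgn m fm f HS Hmu Hq Hn Hsgn Hop).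
Qed.
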